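(* Let $M$ be a finite monoid. Every filtered left $M$-set is isomorphic to $Me$ for some idempotent $e\in M$. Moreover, $e\mapsto Me$ yields an equivalence of categories $\mathfrak I(M)^{op}\simeq \mathbf{Pts}(M)$, where $\mathbf{Pts}(M)$ is identified (via Diaconescu's theorem) with the category of filtered left $M$-sets and $M$-equivariant maps.
   Context: A left $M$-set $A$ is filtered if the functor $(-)\otimes_M A$ from right $M$-sets to sets preserves finite limits; equivalently (F1) $A\neq\emptyset$; (F2) if $m_1a=m_2a$ ($m_i\in M,a\in A$) then there are $m\in M,\tilde a\in A$ with $m\tilde a=a$, $m_1m=m_2m$; (F3) for $a_1,a_2\in A$ there are $m_1,m_2\in M$, $a\in A$ with $m_ia=a_i$. $\mathbf{Pts}(M)$ is the category of points of the topos of right $M$-sets. The category $\mathfrak I(M)$ has as objects the idempotents of $M$, with $\mathrm{Hom}_{\mathfrak I(M)}(e,f)=fMe=\{fme\mid m\in M\}$, composition given by multiplication in $M$ (the composite of $fme:e\to f$ and $gnf:f\to g$ is $gnfme$), and identity of $e$ equal to $e$. Here $Me=\{me\mid m\in M\}$ is a left $M$-set under left multiplication; an element $a\in eMf$ corresponds to the $M$-map $Me\to Mf$, $me\mapsto ma$. *)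

From mathcomp Require Import ssreflect ssrfun ssrbool eqtype ssrnat seq choice monoid.

Set Implicit Arguments.
Unset Strict Implicit.
Unset Printing Implicit Defensive.

Local Open Scope group_scope.

Definition finite_monoid (M : monoidType) : Prop :=
  exists s : seq M, forall m : M, m \in s.

Definition idempotent_elt (M : monoidType) (e : M) : Prop := e * e = e.

Definition is_left_action (M : monoidType) (A : Type) (act : M -> A -> A) : Prop :=
  (forall a, act 1 a = a) /\
  (forall m n a, act (m * n) a = act m (act n a)).

(* Filtered left M-sets, conditions (F1)-(F3). *)
Definition filtered (M : monoidType) (A : Type) (act : M -> A -> A) : Prop :=
  [/\ (exists a : A, True),
      (forall (m1 m2 : M) (a : A), act m1 a = act m2 a ->
         exists (m : M) (a' : A), act m a' = a /\ m1 * m = m2 * m)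
    & (forall a1 a2 : A, exists (m1 m2 : M) (a : A),
         act m1 a = a1 /\ act m2 a = a2)].

Definition equivariant (M : monoidType) (A B : Type)
  (actA : M -> A -> A) (actB : M -> B -> B) (g : A -> B) : Prop :=
  forall m a, g (actA m a) = actB m (g a).

Definition Me (M : monoidType) (e : M) : Type := {x : M | exists m : M, x = m * e}.

Lemma Me_closed (M : monoidType) (e : M) (n : M) (x : Me e) :
  exists m : M, n * proj1_sig x = m * e.
Proof.
case: x => x [m Hx] /=; exists (n * m); by rewrite Hx mulgA.
Qed.

Definition Me_act (M : monoidType) (e : M) (n : M) (x : Me e) : Me e :=
  exist _ (n * proj1_sig x) (Me_closed n x).

Definition in_eMf (M : monoidType) (e f a : M) : Prop := exists m : M, a = e * m * f.

Lemma rmul_closed (M : monoidType) (e f a : M) (Ha : in_eMf e f a) (x : Me e) :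
  exists m : M, proj1_sig x * a = m * f.
Proof.
case: Ha => n ->; exists (proj1_sig x * (e * n)); by rewrite mulgA.
Qed.

Definition rmul_map (M : monoidType) (e f a : M) (Ha : in_eMf e f a)
  (x : Me e) : Me f :=
  exist _ (proj1_sig x * a) (rmul_closed Ha x).

From mathcomp Require Import ssreflect ssrfun ssrbool eqtype ssrnat seq choice monoid.
From mathcomp Require Import boolp zify.

(* The functor side is Yoneda-like.  For e idempotent, Me is generated by e
   (x = x e), which makes Me filtered, and an equivariant map h : Me -> Mf is
   determined by a = h(e), an element of eMf; so h is x |-> x a.

   Essential surjectivity uses finiteness of M twice.  First, a filtered
   M-set A is cyclic: by (F3) any orbit Mc can be enlarged to contain any
   given b, and orbits have at most |M| elements, so a maximal orbit is all
   of A.  Second, for a generator c, (F2) lets us kill one coincidence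
   m1 c = m2 c at a time by right multiplication with an element fixing c;
   doing this for the finitely many pairs yields w with w c = c and
   m1 c = m2 c <-> m1 w = m2 w.  Then w is idempotent and m c |-> m w is an
   isomorphism A ~ Mw. *)

Set Implicit Arguments.
Unset Strict Implicit.
Unset Printing Implicit Defensive.

Local Open Scope group_scope.

Section MeBasics.
Variables (M : monoidType) (e : M).

Lemma Me_val_inj (x y : Me e) : proj1_sig x = proj1_sig y -> x = y.
Proof. by case: x y => [x px] [y py] /= Exy; apply: eq_exist. Qed.

Lemma Me_mulr (idem_e : idempotent_elt e) (x : Me e) : proj1_sig x * e = proj1_sig x.
Proof. by case: x => x [n xE] /=; rewrite xE -mulgA idem_e. Qed.

Lemma Me_left_action : is_left_action (@Me_act M e).
Proof. by split=> [x|m n x]; apply: Me_val_inj; rewrite /= ?mul1g ?mulgA. Qed.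

Definition Me_gen : Me e := exist _ e (ex_intro _ 1 (esym (mul1g e))).

End MeBasics.

Lemma rmul_map_comp (M : monoidType) (e f g a b : M) (Ha : in_eMf e f a)
    (Hb : in_eMf f g b) (Hab : in_eMf e g (a * b)) (x : Me e) :
  rmul_map Hab x = rmul_map Hb (rmul_map Ha x).
Proof. by apply: Me_val_inj; rewrite /= mulgA. Qed.

Section MeFilteredSet.
Variables (M : monoidType) (e : M).
Hypothesis idem_e : idempotent_elt e.

Lemma Me_act_gen (x : Me e) : Me_act (proj1_sig x) (Me_gen e) = x.
Proof. by apply: Me_val_inj; rewrite /= Me_mulr. Qed.

(* Me is filtered: (F1) it contains e; (F2) if m1 x = m2 x, then x = x e
   witnesses the condition; (F3) any two elements are images of e. *)
Lemma Me_filtered : filtered (@Me_act M e).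
Proof.
split; first by exists (Me_gen e).
  move=> m1 m2 x /(congr1 (@proj1_sig _ _)) /= E12.
  by exists (proj1_sig x), (Me_gen e); rewrite Me_act_gen.
by move=> x y; exists (proj1_sig x), (proj1_sig y), (Me_gen e); rewrite !Me_act_gen.
Qed.

Lemma rmul_map_id (Hee : in_eMf e e e) (x : Me e) : rmul_map Hee x = x.
Proof. by apply: Me_val_inj; rewrite /= Me_mulr. Qed.

Lemma eMf_mull (f a : M) : in_eMf e f a -> e * a = a.
Proof. by case=> n ->; rewrite !mulgA idem_e. Qed.

(* Yoneda, faithfulness: a is recovered as the image of the generator e. *)
Lemma rmul_map_inj (f a b : M) (Ha : in_eMf e f a) (Hb : in_eMf e f b) :
  (forall x : Me e, rmul_map Ha x = rmul_map Hb x) -> a = b.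
Proof.
move=> /(_ (Me_gen e)) /(congr1 (@proj1_sig _ _)) /=.
by rewrite (eMf_mull Ha) (eMf_mull Hb).
Qed.

(* Yoneda, fullness: an equivariant map is right multiplication by the
   image of the generator e, which lies in eMf since e = e * e. *)
Lemma equivariant_rmul_map (f : M) (h : Me e -> Me f) :
  equivariant (@Me_act M e) (@Me_act M f) h ->
  exists (a : M) (Ha : in_eMf e f a), forall x : Me e, h x = rmul_map Ha x.
Proof.
move=> h_eqv; set a := proj1_sig (h (Me_gen e)).
have ea : e * a = a.
  by rewrite /a -{2}(Me_act_gen (Me_gen e)) h_eqv.
have Ha : in_eMf e f a.
  by case: (proj2_sig (h (Me_gen e))) => n an; exists n; rewrite -mulgA -an ea.
exists a, Ha => x; apply: Me_val_inj => /=.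
by rewrite -[in LHS](Me_act_gen x) h_eqv.
Qed.

End MeFilteredSet.

Section CyclicGenerator.
Variables (M : monoidType) (A : Type) (act : M -> A -> A) (s : seq M).
Hypotheses (s_full : forall m : M, m \in s) (actP : is_left_action act).
Hypothesis (filteredA : filtered act).

(* The orbit Mc of c, as a duplicate-free list (A has classical equality). *)
Definition orbit (c : A) : seq {classic A} := undup [seq (act m c : {classic A}) | m <- s].

Lemma mem_orbit c (b : A) : ((b : {classic A}) \in orbit c) <-> exists m, b = act m c.
Proof.
rewrite /orbit mem_undup; split; first by case/mapP => m _ ->; exists m.
by case=> m ->; apply/mapP; exists m.
Qed.

Lemma size_orbit c : size (orbit c) <= size s.
Proof. by rewrite (leq_trans (size_undup _)) // size_map. Qed.

(* By (F3), c and b both lie in the orbit of some c', hence so does Mc. *)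
Lemma orbit_enlarge c (b : A) :
  exists c', {subset orbit c <= orbit c'} /\ (b : {classic A}) \in orbit c'.
Proof.
have [_ actM] := actP; have [_ _ /(_ c b) [m1 [m2 [c' [Ec Eb]]]]] := filteredA.
exists c'; split; last by apply/mem_orbit; exists m2.
by move=> x /mem_orbit [m ->]; apply/mem_orbit; exists (m * m1); rewrite actM Ec.
Qed.

Lemma orbit_grow c :
  (forall b, exists m, b = act m c) \/ exists c', size (orbit c) < size (orbit c').
Proof.
case: (pselect (forall b, exists m, b = act m c)) => [gen|/existsNP [b bNorb]].
  by left.
right; have [c' [sub borb]] := orbit_enlarge c b.
exists c'; apply: (uniq_leq_size (s1 := (b : {classic A}) :: orbit c)).
  by rewrite /= undup_uniq andbT; apply/negP => /mem_orbit.
by move=> x; rewrite inE => /predU1P [->|/sub].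
Qed.

(* A filtered M-set over a finite monoid is cyclic: orbit sizes are bounded
   by |M|, so growing orbits must reach a generator. *)
Lemma cyclic_generator : exists c, forall b, exists m, b = act m c.
Proof.
have [[c0 _] _ _] := filteredA.
suff: forall n c, size s - size (orbit c) <= n -> exists c, forall b, exists m, b = act m c.
  by move=> /(_ (size s) c0); apply; exact: leq_subr.
elim=> [|n IH] c gap; case: (orbit_grow c) => [gen|[c' lt_cc']]; try by exists c.
  by have := size_orbit c'; lia.
by apply: (IH c'); have := size_orbit c'; lia.
Qed.

End CyclicGenerator.

Section CyclicFilteredSet.
Variables (M : monoidType) (A : Type) (act : M -> A -> A) (c : A).
Hypotheses (actP : is_left_action act) (filteredA : filtered act).
Hypothesis c_gen : forall b, exists m, b = act m c.

(* Given a generator c and a finite list of pairs, some w fixing c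
   coequalizes every pair that c identifies: if m1 (w c) = m2 (w c), (F2)
   gives m with m1 w m = m2 w m and m a = c for some a = k c, and w m k
   still fixes c. *)
Lemma coequalizing_element (L : seq (M * M)) :
  exists w, act w c = c /\
    forall m1 m2, (m1, m2) \in L -> act m1 c = act m2 c -> m1 * w = m2 * w.
Proof.
have [act1 actM] := actP; have [_ F2 _] := filteredA.
elim: L => [|[m1 m2] L [w [wc coeqL]]]; first by exists 1; split.
case: (pselect (act m1 c = act m2 c)) => [E12|N12]; last first.
  exists w; split=> // n1 n2; rewrite in_cons => /predU1P [[-> ->] /N12 //|]; exact: coeqL.
have: act (m1 * w) c = act (m2 * w) c by rewrite !actM wc E12.
case/F2 => m [a [Ea Em]]; have [k Ea'] := c_gen a.
exists (w * (m * k)); split; first by rewrite !actM -Ea' Ea wc.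
move=> n1 n2; rewrite in_cons => /predU1P [[-> ->] _|/coeqL coeq /coeq E].
  by rewrite !mulgA Em.
by rewrite !mulgA E.
Qed.

(* Over a finite monoid, a single w coequalizes all pairs identified by c;
   it is idempotent since w c = c = 1 c. *)
Lemma kernel_idempotent (s : seq M) : (forall m, m \in s) ->
  exists e, idempotent_elt e /\ forall m1 m2, act m1 c = act m2 c <-> m1 * e = m2 * e.
Proof.
move=> s_full; have [act1 actM] := actP.
have [e [ec coeq]] := coequalizing_element [seq (m1, m2) | m1 <- s, m2 <- s].
have ker m1 m2 : act m1 c = act m2 c <-> m1 * e = m2 * e.
  split; first by apply: coeq; exact: allpairs_f.
  by move=> E; rewrite -ec -!actM E.
exists e; split=> //; rewrite /idempotent_elt -[RHS]mul1g; apply/ker.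
by rewrite act1.
Qed.

Lemma cyclic_filtered_iso (s : seq M) : (forall m, m \in s) ->
  exists (e : M) (phi : A -> Me e),
    idempotent_elt e /\ bijective phi /\ equivariant act (@Me_act M e) phi.
Proof.
move=> /kernel_idempotent [e [idem_e ker]]; have [act1 actM] := actP.
have ec : act e c = c by rewrite -{2}[c]act1; apply/ker; rewrite idem_e mul1g.
pose coord b := proj1_sig (cid (c_gen b)).
have coordP b : b = act (coord b) c := proj2_sig (cid (c_gen b)).
pose phi b : Me e := exist _ (coord b * e) (ex_intro _ (coord b) erefl).
exists e, phi; split=> //; split.
  exists (fun x : Me e => act (proj1_sig x) c) => [b|x] /=.
    by rewrite actM ec -coordP.
  apply: Me_val_inj => /=; rewrite -[RHS](Me_mulr idem_e x); apply/ker.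
  by rewrite -coordP.
move=> m b; apply: Me_val_inj => /=; rewrite mulgA; apply/ker.
by rewrite actM -!coordP.
Qed.

End CyclicFilteredSet.

Lemma filtered_iso_Me (M : monoidType) (A : Type) (act : M -> A -> A) :
  finite_monoid M -> is_left_action act -> filtered act ->
  exists (e : M) (phi : A -> Me e),
    idempotent_elt e /\ bijective phi /\ equivariant act (@Me_act M e) phi.
Proof.
move=> [s s_full] actP filteredA.
have [c c_gen] := cyclic_generator s_full actP filteredA.
exact: (cyclic_filtered_iso actP filteredA c_gen s_full).
Qed.

Theorem theorem3p14 (M : monoidType) (finM : finite_monoid M) :
  (* the functor e |-> Me lands in filtered left M-sets (= Pts(M)) *)
  (forall e : M, idempotent_elt e ->
     is_left_action (@Me_act M e) /\ filtered (@Me_act M e)) /\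
  (* functoriality: identities and composition are preserved *)
  (forall (e : M) (He : idempotent_elt e) (Hee : in_eMf e e e) (x : Me e),
     rmul_map Hee x = x) /\
  (forall (e f g a b : M) (Ha : in_eMf e f a) (Hb : in_eMf f g b)
          (Hab : in_eMf e g (a * b)) (x : Me e),
     rmul_map Hab x = rmul_map Hb (rmul_map Ha x)) /\
  (* full faithfulness: a |-> (x |-> x a) is a bijection from eMf onto the
     M-equivariant maps Me -> Mf *)
  (forall e f : M, idempotent_elt e -> idempotent_elt f ->
     (forall (a b : M) (Ha : in_eMf e f a) (Hb : in_eMf e f b),
        (forall x : Me e, rmul_map Ha x = rmul_map Hb x) -> a = b) /\
     (forall h : Me e -> Me f,
        equivariant (@Me_act M e) (@Me_act M f) h ->
        exists (a : M) (Ha : in_eMf e f a), forall x : Me e, h x = rmul_map Ha x)) /\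
  (* essential surjectivity: every filtered left M-set is isomorphic to some Me *)
  (forall (A : Type) (act : M -> A -> A),
     is_left_action act -> filtered act ->
     exists (e : M) (phi : A -> Me e),
       idempotent_elt e /\ bijective phi /\ equivariant act (@Me_act M e) phi).
Proof.
split; first by move=> e idem_e; split; [exact: Me_left_action | exact: Me_filtered].
split; first by move=> e idem_e; exact: rmul_map_id.
split; first exact: rmul_map_comp.
split; first by move=> e f idem_e _; split; [exact: rmul_map_inj | exact: equivariant_rmul_map].
by move=> A act; exact: filtered_iso_Me.
Qed.
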